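(* Let $G=(V,E)$ be a finite connected multigraph, $\mathscr H$ its exchange graph, $\mathscr H_0$ a connected component of $\mathscr H$ with vertex set $\mathscr V_0$, and $G_0$ the spanning subgraph of $G$ associated to $\mathscr H_0$. Let $X\subseteq V$ be saturated with respect to $G_0$. Then for every vertex $(A,B)\in\mathscr V_0$, the induced subgraphs $A[X]$ and $B[X]$ are edge-disjoint trees with vertex set $X$.
   Context: A spanning tree of $G$ is a subgraph with vertex set $V$ that is a tree; a spanning 2-forest is a subgraph with vertex set $V$, without cycles, with exactly two connected components. $\mathcal{ST}(G)$ and $\mathcal{SF}_2(G)$ denote the sets of these. For a spanning subgraph $G'$ and an edge $e\notin E(G')$, $G'+e$ is the spanning subgraph with edge set $E(G')\cup\{e\}$; for $e\in E(G')$, $G'-e$ has edge set $E(G')\setminus\{e\}$. The exchange graph $\mathscr H$ of $G$ is the bipartite graph with vertex set $\mathscr V_1\sqcup\mathscr V_2$, where $\mathscr V_1=\{(F,T): F\in\mathcal{SF}_2(G),T\in\mathcal{ST}(G),E(F)\cap E(T)=\emptyset\}$ and $\mathscr V_2=\{(T,F):T\in\mathcal{ST}(G),F\in\mathcal{SF}_2(G),E(F)\cap E(T)=\emptyset\}$; $(F,T)\in\mathscr V_1$ is adjacent to $(T',F')\in\mathscr V_2$ iff there is an edge $e\in E(T)$ with $F'=T-e$ and $T'=F+e$. For a connected component $\mathscr H_0$ of $\mathscr H$, the set $E(A)\cup E(B)$ is the same for all vertices $(A,B)$ of $\mathscr H_0$; the associated spanning subgraph $G_0$ is the spanning subgraph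 of $G$ with this edge set. For $X\subseteq V$ and a (spanning) subgraph $K$, $K[X]$ denotes the induced subgraph on $X$ (vertex set $X$, edges of $K$ with both endpoints in $X$). A subset $X\subseteq V$ is saturated with respect to $G_0$ if $G_0[X]$ has exactly $2|X|-2$ edges. *)

From mathcomp Require Import all_boot.
Set Implicit Arguments. Unset Strict Implicit. Unset Printing Implicit Defensive.

(* A finite multigraph G = (V, E) is given by finite types of vertices V and
   edges E and an endpoint map [ends : E -> V * V] (parallel edges and loops
   allowed). A spanning subgraph is represented by its edge set {set E}. *)

Section Graphs.
Variables (V E : finType) (ends : E -> V * V).

Definition adj (S : {set E}) : rel V :=
  fun x y => [exists e in S,
    (((ends e).1 == x) && ((ends e).2 == y)) ||
    (((ends e).1 == y) && ((ends e).2 == x))].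

(* S has no cycle: no edge of S (loops included) has its endpoints connected
   in S minus that edge *)
Definition acyclic (S : {set E}) : bool :=
  [forall e in S, ~~ connect (adj (S :\ e)) (ends e).1 (ends e).2].

Definition connected_on (X : {set V}) (S : {set E}) : bool :=
  [forall x in X, [forall y in X, connect (adj S) x y]].

Definition edges_within (X : {set V}) (S : {set E}) : bool :=
  [forall e in S, ((ends e).1 \in X) && ((ends e).2 \in X)].

Definition is_tree_on (X : {set V}) (S : {set E}) : bool :=
  [&& X != set0, edges_within X S, connected_on X S & acyclic S].

Definition is_spanning_tree (S : {set E}) : bool := is_tree_on [set: V] S.

Definition ncomp (S : {set E}) : nat :=
  #|[set [set y | connect (adj S) x y] | x : V]|.

Definition is_spanning_2forest (S : {set E}) : bool :=
  acyclic S && (ncomp S == 2).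

Definition graph_connected : bool := connected_on [set: V] [set: E].

Definition induced (X : {set V}) (K : {set E}) : {set E} :=
  [set e in K | ((ends e).1 \in X) && ((ends e).2 \in X)].

(* Exchange graph. A vertex is tagged: (false, (F, T)) is (F,T) in V_1,
   (true, (T, F)) is (T,F) in V_2. *)
Definition hvert := (bool * ({set E} * {set E}))%type.

Definition hvalid (u : hvert) : bool :=
  let: (s, (P, Q)) := u in
  [&& (if s then is_spanning_tree P && is_spanning_2forest Q
            else is_spanning_2forest P && is_spanning_tree Q)
    & [disjoint P & Q]].

Definition hstep (FT T'F' : {set E} * {set E}) : bool :=
  let: (F, T) := FT in let: (T', F') := T'F' in
  [exists e in T, (F' == T :\ e) && (T' == e |: F)].

Definition hadj : rel hvert :=
  fun u w => [&& hvalid u, hvalid w &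
     ((~~ u.1) && w.1 && hstep u.2 w.2) || (u.1 && ~~ w.1 && hstep w.2 u.2)].

(* edge set of the spanning subgraph associated to the component of u:
   E(A) ∪ E(B) for (A,B) = u (independent of the chosen vertex of the
   component) *)
Definition assoc_edges (u : hvert) : {set E} := u.2.1 :|: u.2.2.

(* X saturated w.r.t. G0 (edge set S0): G0[X] has exactly 2|X| - 2 edges
   (integer subtraction, written without truncation) *)
Definition saturated (S0 : {set E}) (X : {set V}) : bool :=
  #|induced X S0| + 2 == 2 * #|X|.

End Graphs.

From mathcomp Require Import all_boot.
From mathcomp Require Import zify.
Set Implicit Arguments. Unset Strict Implicit. Unset Printing Implicit Defensive.

(* Every vertex (A, B) of the component H0 is a pair of edge-disjoint forests
   with A ∪ B = E(G0), so A[X] and B[X] are edge-disjoint forests on X with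
   |A[X]| + |B[X]| = |G0[X]| = 2|X| - 2. A forest on a nonempty vertex set X
   has at most |X| - 1 edges, so both have exactly |X| - 1 edges, and a forest
   on X with |X| - 1 edges is connected, i.e. a tree on X. *)

Section Forests.
Variables (V E : finType) (ends : E -> V * V).
Implicit Types (X Y : {set V}) (S : {set E}).

Lemma adj_sym S : symmetric (adj ends S).
Proof.
by move=> x y; apply/existsP/existsP => -[e He]; exists e; rewrite orbC.
Qed.

Lemma connect_adj_sym S : connect_sym (adj ends S).
Proof. exact/sym_connect_sym/adj_sym. Qed.

Lemma connect_adjS S S' x y :
  S \subset S' -> connect (adj ends S) x y -> connect (adj ends S') x y.
Proof.
move=> sSS'; apply: connect_sub => {}x {}y /existsP[e /andP[eS xy]].
by apply: connect1; apply/existsP; exists e; rewrite (subsetP sSS').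
Qed.

Lemma acyclicS S S' : S \subset S' -> acyclic ends S' -> acyclic ends S.
Proof.
move=> sSS' /forallP acS'; apply/forallP => e; apply/implyP => eS.
by apply: contra (implyP (acS' e) (subsetP sSS' e eS)); apply/connect_adjS/setSD.
Qed.

Lemma edges_withinS X S S' :
  S \subset S' -> edges_within ends X S' -> edges_within ends X S.
Proof.
move=> sSS' /forallP wS'; apply/forallP => e; apply/implyP => eS.
exact: implyP (wS' e) (subsetP sSS' e eS).
Qed.

Lemma induced_sub X S : induced ends X S \subset S.
Proof. by apply/subsetP => e; rewrite inE => /andP[]. Qed.

Lemma edges_within_induced X S : edges_within ends X (induced ends X S).
Proof. by apply/forallP => e; apply/implyP; rewrite inE => /andP[_ ->]. Qed.

Lemma inducedU X S S' :
  induced ends X (S :|: S') = induced ends X S :|: induced ends X S'.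
Proof. by apply/setP => e; rewrite !inE andb_orl. Qed.

(* The component C of a inside X is closed under the edges of S, so every edge
   of S outside S[C] has both endpoints in X \ C. *)
Lemma edges_within_cut X S a b :
  edges_within ends X S -> a \in X -> b \in X -> ~~ connect (adj ends S) a b ->
  exists C : {set V}, [/\ C \subset X, a \in C, b \notin C,
    edges_within ends C (induced ends C S) &
    edges_within ends (X :\: C) (S :\: induced ends C S)].
Proof.
move=> /forallP wS aX bX nab; exists [set v in X | connect (adj ends S) a v].
split; first by apply/subsetP => v; rewrite inE => /andP[].
- by rewrite inE aX connect0.
- by rewrite inE bX.
- exact: edges_within_induced.
apply/forallP => e; apply/implyP; rewrite !inE => /andP[not_in eS].
have /andP[e1X e2X] := implyP (wS e) eS.
have e12 : connect (adj ends S) (ends e).1 (ends e).2.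
  by apply: connect1; apply/existsP; exists e; rewrite eS !eqxx.
have e21 : connect (adj ends S) (ends e).2 (ends e).1
  by rewrite connect_adj_sym.
move: not_in; rewrite eS e1X e2X /= !andbT.
have [a1|na1] := boolP (connect _ a (ends e).1); first by rewrite (connect_trans a1 e12).
by move=> _ /=; apply/negP => a2; case/negP: na1; apply: connect_trans a2 e21.
Qed.

Lemma disconnected_card X S a b :
  (forall Y S', Y \proper X -> Y != set0 -> edges_within ends Y S' ->
     acyclic ends S' -> #|S'| < #|Y|) ->
  edges_within ends X S -> acyclic ends S -> a \in X -> b \in X ->
  ~~ connect (adj ends S) a b -> #|S| + 2 <= #|X|.
Proof.
move=> forest_bound wS acS aX bX nab.
have [C [sCX aC bC wC wXC]] := edges_within_cut wS aX bX nab.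
have ltC : #|induced ends C S| < #|C|.
  apply: forest_bound wC (acyclicS (induced_sub _ _) acS).
    by apply/properP; split => //; exists b.
  by apply/set0Pn; exists a.
have ltXC : #|S :\: induced ends C S| < #|X :\: C|.
  apply: forest_bound wXC (acyclicS (subsetDl _ _) acS).
    by apply/properP; split; [exact: subsetDl | exists a; rewrite ?inE ?aC].
  by apply/set0Pn; exists b; rewrite inE bC.
have := cardsID (induced ends C S) S; rewrite (setIidPr (induced_sub _ _)).
have := cardsID C X; rewrite (setIidPr sCX).
lia.
Qed.

Lemma acyclic_card_lt X S :
  X != set0 -> edges_within ends X S -> acyclic ends S -> #|S| < #|X|.
Proof.
elim: {X}_.+1 {-2}X (ltnSn #|X|) S => // n IHn X leXn S X0 wS acS.
have [->|/set0Pn[e eS]] := eqVneq S set0; first by rewrite cards0 card_gt0.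
have /andP[e1X e2X] := implyP (forallP wS e) eS.
have forest_bound Y S' : Y \proper X -> Y != set0 -> edges_within ends Y S' ->
    acyclic ends S' -> #|S'| < #|Y|.
  by move=> /proper_card ltYX; apply: IHn; apply: leq_trans ltYX _.
have := disconnected_card forest_bound (edges_withinS (subD1set S e) wS)
  (acyclicS (subD1set S e) acS) e1X e2X (implyP (forallP acS e) eS).
by rewrite (cardsD1 e S) eS; lia.
Qed.

Lemma acyclic_card_connected X S :
  edges_within ends X S -> acyclic ends S -> #|S|.+1 = #|X| ->
  connected_on ends X S.
Proof.
move=> wS acS cardS; apply/forallP => x; apply/implyP => xX.
apply/forallP => y; apply/implyP => yX; apply/negPn/negP => nxy.
have forest_bound Y S' : Y \proper X -> Y != set0 -> edges_within ends Y S' ->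
  acyclic ends S' -> #|S'| < #|Y| by move=> _; apply: acyclic_card_lt.
by have := disconnected_card forest_bound wS acS xX yX nxy; lia.
Qed.

Lemma disjoint_forests_saturated_trees X A B :
  edges_within ends X A -> edges_within ends X B ->
  acyclic ends A -> acyclic ends B -> [disjoint A & B] ->
  #|A :|: B| + 2 = 2 * #|X| -> is_tree_on ends X A && is_tree_on ends X B.
Proof.
move=> wA wB acA acB dAB cardAB.
have X0 : X != set0 by rewrite -card_gt0; lia.
have ltA := acyclic_card_lt X0 wA acA.
have ltB := acyclic_card_lt X0 wB acB.
move: cardAB; rewrite cardsU (disjoint_setI0 dAB) cards0 subn0 => cardAB.
have cardA : #|A|.+1 = #|X| by lia.
have cardB : #|B|.+1 = #|X| by lia.
by rewrite /is_tree_on X0 wA wB acA acB !acyclic_card_connected.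
Qed.

End Forests.

Section ExchangeGraph.
Variables (V E : finType) (ends : E -> V * V).

Lemma hstep_union (F T F' T' : {set E}) :
  hstep (F, T) (T', F') -> T' :|: F' = F :|: T.
Proof.
case/existsP => e /andP[eT /andP[/eqP -> /eqP ->]].
by apply/setP => f; rewrite !inE; case: (eqVneq f e) => [->|] //=; rewrite eT orbT.
Qed.

Lemma hadj_assoc_edges u w : hadj ends u w -> assoc_edges w = assoc_edges u.
Proof.
case: u w => [s [P Q]] [s' [P' Q']] /and3P[_ _ /orP[]] /andP[_ /hstep_union];
  by rewrite /assoc_edges /= => ->.
Qed.

Lemma connect_hadj_invariant u v :
  connect (hadj ends) u v -> hvalid ends u ->
  hvalid ends v /\ assoc_edges v = assoc_edges u.
Proof.
pose inv := [pred w | hvalid ends w && (assoc_edges w == assoc_edges u)].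
have closed_inv : closed (hadj ends) inv.
  move=> w w' ww'; case/and3P: (ww') => hw hw' _.
  by rewrite !inE hw hw' (hadj_assoc_edges ww').
move=> /(closed_connect closed_inv) uv hu.
by move: uv; rewrite !inE hu eqxx => /esym/andP[-> /eqP].
Qed.

Lemma hvalid_forests u :
  hvalid ends u ->
  [&& acyclic ends u.2.1, acyclic ends u.2.2 & [disjoint u.2.1 & u.2.2]].
Proof.
case: u => [[] [P Q]] /andP[+ ->]; rewrite andbT.
  by case/andP => /and4P[_ _ _ ->] /andP[].
by case/andP => /andP[-> _] /and4P[_ _ _ ->].
Qed.

End ExchangeGraph.

Theorem lemma2p6 (V E : finType) (ends : E -> V * V) (u0 : hvert E)
    (X : {set V}) :
  graph_connected ends ->
  hvalid ends u0 ->
  saturated ends (assoc_edges u0) X ->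
  forall v : hvert E, connect (hadj ends) u0 v ->
    [&& is_tree_on ends X (induced ends X v.2.1),
        is_tree_on ends X (induced ends X v.2.2) &
        [disjoint induced ends X v.2.1 & induced ends X v.2.2]].
Proof.
move=> _ hu0 /eqP sat v /connect_hadj_invariant/(_ hu0) [hv assoc_v].
case/and3P: (hvalid_forests hv) => acA acB dAB.
have dXAB : [disjoint induced ends X v.2.1 & induced ends X v.2.2].
  exact: disjointWl (induced_sub _ _ _) (disjointWr (induced_sub _ _ _) dAB).
rewrite dXAB andbT disjoint_forests_saturated_trees ?edges_within_induced //.
- exact: acyclicS (induced_sub _ _ _) acA.
- exact: acyclicS (induced_sub _ _ _) acB.
by rewrite -inducedU -[_ :|: _]/(assoc_edges v) assoc_v.
Qed.
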